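(* Let $f_0,f_1\in \mathrm{PL}_0(\mathbf{I})$ satisfy $[f_1^{f_0},f_0f_1^{-1}]=1$ and $[f_0f_1^{-1},f_1^{f_0^2}]=1$. Let $A=(a,c)$ be an orbital of $f_0$ that is a down-bump, and suppose $(a,c)$ is not an orbital of $f_1$. Let $(b_1,d_1),(b_2,d_2),\dots,(b_n,d_n)$, with $n\ge1$, be all the orbitals of $f_1$ that meet $(a,c)$, in increasing order. Then: (i) $d_n<c$; (ii) there is a point $\rho>a$ such that $f_0|_{[a,\rho]}=f_1|_{[a,\rho]}$; (iii) $b_1=a$; (iv) if $\rho$ is the maximal point such that $f_0|_{[a,\rho]}=f_1|_{[a,\rho]}$, then $d_1f_0\le\rho$; (v) $d_nf_0<d_1$.
   Context: $\mathrm{PL}_0(\mathbf{I})$ is the group of orientation-preserving piecewise-linear homeomorphisms of $[0,1]$ with finitely many points of non-differentiability. Functions act on the right: $tf=f(t)$, $fg=g\circ f$, $a^b=b^{-1}ab$, $[a,b]=aba^{-1}b^{-1}$. The orbitals of $f$ are the connected components (open intervals) of $\operatorname{Supp}(f)=\{x: xf\ne x\}$; an orbital $A$ is a down-bump if $xf<x$ for all $x\in A$. Orbitals are ordered by $A<B$ if every point of $A$ is less than every point of $B$. *)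

From Stdlib Require Import Reals Lra Lia.
Open Scope R_scope.

(* Elements of PL_0(I) are modelled as functions R -> R that are the
   identity outside [0,1].  f is in PL_0(I) iff it is identity outside [0,1],
   fixes 0 and 1, is strictly increasing on [0,1] (orientation preserving),
   and is affine on each piece of a finite subdivision
   0 = p 0 < p 1 < ... < p k = 1 (finitely many breakpoints).
   Continuity and surjectivity onto [0,1] follow. *)
Definition PL0 (f : R -> R) : Prop :=
  (forall x, (x < 0 \/ 1 < x) -> f x = x) /\
  f 0 = 0 /\ f 1 = 1 /\
  (forall x y, 0 <= x -> x < y -> y <= 1 -> f x < f y) /\
  exists (k : nat) (p : nat -> R),
    p 0%nat = 0 /\ p k = 1 /\
    (forall i, (i < k)%nat -> p i < p (S i)) /\
    (forall i, (i < k)%nat -> exists m q : R,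
        forall x, p i <= x <= p (S i) -> f x = m * x + q).

(* A group element together with its inverse: (function, inverse function). *)
Definition elt : Type := ((R -> R) * (R -> R))%type.

(* Right actions: t(fg) = g(f(t)). *)
Definition mulp (a b : elt) : elt :=
  (fun t => fst b (fst a t), fun t => snd a (snd b t)).
Definition invp (a : elt) : elt := (snd a, fst a).
Definition conjp (a b : elt) : elt := mulp (mulp (invp b) a) b.
Definition commp (a b : elt) : elt := mulp (mulp (mulp a b) (invp a)) (invp b).
Definition is_id (a : elt) : Prop := forall t, 0 <= t <= 1 -> fst a t = t.

Definition inverse_of (f g : R -> R) : Prop :=
  (forall x, g (f x) = x) /\ (forall x, f (g x) = x).

Definition moved (f : R -> R) (x : R) : Prop := f x <> x.

Definition orbital (f : R -> R) (a c : R) : Prop :=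
  a < c /\ (forall x, a < x < c -> moved f x) /\ ~ moved f a /\ ~ moved f c.

Definition down_bump (f : R -> R) (a c : R) : Prop :=
  orbital f a c /\ forall x, a < x < c -> f x < x.

Definition meets (b d a c : R) : Prop := Rmax b a < Rmin d c.

Definition agree_on (f g : R -> R) (a r : R) : Prop :=
  forall x, a <= x <= r -> f x = g x.

From Stdlib Require Import Reals Lra Lia Classical.
Open Scope R_scope.

(* Write [H = f0 f1^-1], [U = f1^f0] and [V = f1^(f0^2)]: the two relations say
   that [H] commutes with [U] and with [V], and [H] fixes exactly the points
   where [f0] and [f1] agree.  The engine is a rigidity property of
   piecewise-linear homeomorphisms: a map commuting with [w] on an orbital of
   [w] and fixing one point of it is the identity on the whole orbital.  So if
   [H] moves a point lying in an orbital of [U] and in one of [V], both are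
   orbitals of [H] and coincide.  Since the orbitals of [U] and [V] are the
   [f0]- and [f0^2]-images of those of [f1], this produces an orbital of [f1]
   with ends fixed by [f0], on which [V = U], hence [f0] commutes with [U] and
   is the identity -- impossible across the bump [(a,c)].  This gives (iii),
   the agreement of [f0] and [f1] on [(a, f0 (d 1))] behind (ii) and (iv), and
   (i).  For (v), [V = U^f0 = U^f1] and [V^f0 = V^f1]; if [f0 (d n) >= d 1],
   comparing where the [f0]- and [f1]-images of the last orbitals of [U] and
   [V] end shows that [f0] and [f1] agree at [f0 (d n)] and at its image, so
   [H] fixes a point of the [U]-image of the [f1]-orbital through [f0 (d n)],
   which rigidity forbids. *)

(** * Increasing bijections and their orbitals *)

Lemma lub_exists (E : R -> Prop) (M x0 : R) :
  (forall x, E x -> x <= M) -> E x0 ->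
  exists T, T <= M /\ (forall x, E x -> x <= T) /\
            (forall y, y < T -> exists x, E x /\ y < x).
Proof.
  intros HM Ex0.
  destruct (completeness E) as [T [HT Hleast]]; [now exists M | now exists x0 |].
  exists T. split; [now apply Hleast | split; [exact HT |]].
  intros y Hy. apply NNPP. intros Hnone.
  enough (T <= y) by lra.
  apply Hleast. intros x Ex. apply Rnot_lt_le. intros Hyx. apply Hnone. now exists x.
Qed.

Lemma glb_exists (E : R -> Prop) (m x0 : R) :
  (forall x, E x -> m <= x) -> E x0 ->
  exists T, m <= T /\ (forall x, E x -> T <= x) /\
            (forall y, T < y -> exists x, E x /\ x < y).
Proof.
  intros Hm Ex0.
  destruct (lub_exists (fun x => E (- x)) (- m) (- x0)) as (T & HTm & HT & Happrox).
  - intros x Ex. apply Hm in Ex. lra.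
  - now rewrite Ropp_involutive.
  - exists (- T). split; [lra | split].
    + intros x Ex. enough (- x <= T) by lra. apply HT. now rewrite Ropp_involutive.
    + intros y Hy. destruct (Happrox (- y)) as [x [Ex Hx]]; [lra |].
      exists (- x). split; [exact Ex | lra].
Qed.

Section StrictlyIncreasing.

Variable f : R -> R.
Hypothesis Hf : strict_increasing f.

Lemma strict_increasing_le x y : x <= y -> f x <= f y.
Proof. intros [Hxy | ->]; [left; now apply Hf | right; reflexivity]. Qed.

Lemma strict_increasing_inj x y : f x = f y -> x = y.
Proof.
  intros E. destruct (Rtotal_order x y) as [Hxy | [Hxy | Hxy]]; [| exact Hxy |];
    apply Hf in Hxy; lra.
Qed.

Lemma strict_increasing_lt_rev x y : f x < f y -> x < y.
Proof.
  intros E. destruct (Rlt_le_dec x y) as [Hxy | Hxy]; [exact Hxy |].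
  apply strict_increasing_le in Hxy. lra.
Qed.

Lemma strict_increasing_le_rev x y : f x <= f y -> x <= y.
Proof.
  intros E. destruct (Rle_lt_dec x y) as [Hxy | Hxy]; [exact Hxy |].
  apply Hf in Hxy. lra.
Qed.

End StrictlyIncreasing.

Lemma strict_increasing_inverse f g :
  inverse_of f g -> strict_increasing f -> strict_increasing g.
Proof.
  intros [_ fg] Hf x y Hxy. apply (strict_increasing_lt_rev f Hf). now rewrite !fg.
Qed.

Lemma inverse_fixed f g y : inverse_of f g -> f y = y -> g y = y.
Proof. intros [gf _] Fy. rewrite <- Fy at 1. apply gf. Qed.

(* No continuity is needed: if [f z < z] then [f] moves every point of
   [(f z, g z)], and symmetrically if [f z > z]. *)
Lemma fixed_point_closed f g z : inverse_of f g -> strict_increasing f ->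
  (forall e, 0 < e -> exists y, Rabs (y - z) < e /\ f y = y) -> f z = z.
Proof.
  assert (not_below : forall f g, inverse_of f g -> strict_increasing f ->
            (forall e, 0 < e -> exists y, Rabs (y - z) < e /\ f y = y) -> ~ f z < z).
  { intros f' g' [_ fg] Hf Hacc Hlt.
    assert (Hg : z < g' z) by (apply (strict_increasing_lt_rev f' Hf); now rewrite fg).
    destruct (Hacc (Rmin (z - f' z) (g' z - z))) as [y [Hy Fy]]; [apply Rmin_pos; lra |].
    pose proof (Rmin_l (z - f' z) (g' z - z)). pose proof (Rmin_r (z - f' z) (g' z - z)).
    destruct (Rlt_le_dec y z) as [Hyz | Hzy].
    - apply Hf in Hyz. revert Hy. split_Rabs; lra.
    - assert (f' y < f' (g' z)) by (apply Hf; revert Hy; split_Rabs; lra).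
      rewrite fg in *. lra. }
  intros Hfg Hf Hacc.
  destruct (Rtotal_order (f z) z) as [Hlt | [Heq | Hgt]]; [exfalso | exact Heq | exfalso].
  - exact (not_below f g Hfg Hf Hacc Hlt).
  - destruct Hfg as [gf fg].
    apply (not_below g f (conj fg gf) (strict_increasing_inverse f g (conj gf fg) Hf)).
    + intros e He. destruct (Hacc e He) as [y [Hy Fy]]. exists y.
      split; [exact Hy | exact (inverse_fixed f g y (conj gf fg) Fy)].
    + apply (strict_increasing_lt_rev f Hf). now rewrite fg.
Qed.

Lemma orbital_intro f s t : s < t -> f s = s -> f t = t ->
  (forall x, s < x < t -> f x <> x) -> orbital f s t.
Proof. intros Hst Fs Ft Hmv. unfold orbital, moved. repeat split; auto. Qed.

Lemma orbital_fix_l f s t : orbital f s t -> f s = s.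
Proof. intros (_ & _ & Hs & _). now apply NNPP. Qed.

Lemma orbital_fix_r f s t : orbital f s t -> f t = t.
Proof. intros (_ & _ & _ & Ht). now apply NNPP. Qed.

Lemma orbital_moves f s t : orbital f s t -> forall x, s < x < t -> f x <> x.
Proof. intros (_ & Hmv & _). exact Hmv. Qed.

Lemma orbital_maps_into f s t y : strict_increasing f -> orbital f s t ->
  s < y < t -> s < f y < t.
Proof.
  intros Hf Ho Hy.
  rewrite <- (orbital_fix_l f s t Ho) at 1. rewrite <- (orbital_fix_r f s t Ho).
  split; apply Hf; lra.
Qed.

Lemma orbitals_meeting_eq f g s t l h x :
  orbital f s t -> orbital g l h -> s < x < t -> l < x < h ->
  (forall y, s < y < t -> g y <> y) -> (forall y, l < y < h -> f y <> y) ->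
  s = l /\ t = h.
Proof.
  intros Of Og Hx Hx' Hg Hf.
  pose proof (orbital_fix_l f s t Of) as Fs. pose proof (orbital_fix_r f s t Of) as Ft.
  pose proof (orbital_fix_l g l h Og) as Gl. pose proof (orbital_fix_r g l h Og) as Gh.
  split.
  - destruct (Rtotal_order s l) as [Hlt | [Heq | Hgt]]; [exfalso | exact Heq | exfalso].
    + exact (Hg l ltac:(lra) Gl).
    + exact (Hf s ltac:(lra) Fs).
  - destruct (Rtotal_order t h) as [Hlt | [Heq | Hgt]]; [exfalso | exact Heq | exfalso].
    + exact (Hf t ltac:(lra) Ft).
    + exact (Hg h ltac:(lra) Gh).
Qed.

Lemma orbital_conj phi psi X Y s t : inverse_of phi psi -> strict_increasing phi ->
  (forall y, Y (phi y) = phi (X y)) -> orbital X s t -> orbital Y (phi s) (phi t).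
Proof.
  intros [_ phipsi] Hphi HXY Ho.
  apply orbital_intro.
  - apply Hphi. exact (proj1 Ho).
  - now rewrite HXY, (orbital_fix_l X s t Ho).
  - now rewrite HXY, (orbital_fix_r X s t Ho).
  - intros x Hx. rewrite <- (phipsi x), HXY. intros E.
    apply (strict_increasing_inj phi Hphi) in E. revert E.
    apply (orbital_moves X s t Ho).
    split; apply (strict_increasing_lt_rev phi Hphi); rewrite phipsi; lra.
Qed.

Lemma conj_fixes_image phi psi X Y r c : inverse_of phi psi -> strict_increasing phi ->
  phi c = c -> (forall y, Y (phi y) = phi (X y)) -> (forall z, r <= z <= c -> X z = z) ->
  forall z, phi r <= z <= c -> Y z = z.
Proof.
  intros [_ phipsi] Hphi Hc HXY Hfix z Hz.
  rewrite <- (phipsi z), HXY, Hfix; [reflexivity |].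
  split; apply (strict_increasing_le_rev phi Hphi); rewrite phipsi; [| rewrite Hc]; lra.
Qed.

Lemma orbital_around f g x lo hi : inverse_of f g -> strict_increasing f ->
  lo <= x <= hi -> f lo = lo -> f hi = hi -> f x <> x ->
  exists l h, l < x < h /\ orbital f l h.
Proof.
  intros Hfg Hf Hx Flo Fhi Hmv.
  destruct (lub_exists (fun y => lo <= y <= x /\ f y = y) x lo)
    as (l & Hlx & Hl & Hl_approx); [now intros y [Hy _] | split; [lra | exact Flo] |].
  destruct (glb_exists (fun y => x <= y <= hi /\ f y = y) x hi)
    as (h & Hxh & Hh & Hh_approx); [now intros y [Hy _] | split; [lra | exact Fhi] |].
  assert (Hlo : lo <= l) by (apply Hl; split; [lra | exact Flo]).
  assert (Hhi : h <= hi) by (apply Hh; split; [lra | exact Fhi]).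
  assert (Fl : f l = l).
  { apply (fixed_point_closed f g l Hfg Hf). intros e He.
    destruct (Hl_approx (l - e)) as (y & Ey & Hy); [lra |].
    exists y. split; [| exact (proj2 Ey)].
    assert (y <= l) by (apply Hl, Ey). apply Rabs_def1; lra. }
  assert (Fh : f h = h).
  { apply (fixed_point_closed f g h Hfg Hf). intros e He.
    destruct (Hh_approx (h + e)) as (y & Ey & Hy); [lra |].
    exists y. split; [| exact (proj2 Ey)].
    assert (h <= y) by (apply Hh, Ey). apply Rabs_def1; lra. }
  assert (l <> x) by (intros ->; contradiction).
  assert (h <> x) by (intros ->; contradiction).
  exists l, h. split; [lra |].
  apply orbital_intro; [lra | exact Fl | exact Fh |].
  intros y Hy Fy. destruct (Rle_lt_dec y x).
  - enough (y <= l) by lra. apply Hl. split; [lra | exact Fy].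
  - enough (h <= y) by lra. apply Hh. split; [lra | exact Fy].
Qed.

Lemma fixed_points_around (f : R -> R) x :
  (forall t, t < 0 \/ 1 < t -> f t = t) ->
  exists lo hi, lo <= x <= hi /\ f lo = lo /\ f hi = hi.
Proof.
  intros Hout. exists (Rmin x 0 - 1), (Rmax x 1 + 1).
  pose proof (Rmin_l x 0). pose proof (Rmin_r x 0).
  pose proof (Rmax_l x 1). pose proof (Rmax_r x 1).
  split; [lra | split; apply Hout; lra].
Qed.

Lemma orbital_end_le f s t r c : orbital f s t -> t <= c ->
  (forall z, r <= z <= c -> f z = z) -> t <= r.
Proof.
  intros Ho Htc Hfix. destruct (Rle_lt_dec t r) as [| Hrt]; [assumption | exfalso].
  assert (Hst := proj1 Ho).
  pose proof (Rmax_l r s). pose proof (Rmax_r r s).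
  assert (Rmax r s < t) by (apply Rmax_lub_lt; lra).
  apply (orbital_moves f s t Ho ((Rmax r s + t) / 2)); [lra |].
  apply Hfix. lra.
Qed.

Lemma orbital_step_down w wi s t T : inverse_of w wi -> strict_increasing w ->
  orbital w s t -> s < T < t ->
  exists T', T < T' <= t /\
    forall y, T <= y < T' -> exists z, s < z < T /\ (w y = z \/ w z = y).
Proof.
  intros [wiw wwi] Hw Ho HT.
  pose proof (orbital_fix_l w s t Ho) as Ws.
  assert (Hwi := strict_increasing_inverse w wi (conj wiw wwi) Hw).
  pose proof (Rmin_r (wi T) t). pose proof (Rmin_r (w T) t).
  destruct (Rtotal_order (w T) T) as [Hlt | [Heq | Hgt]].
  - assert (T < wi T) by (apply (strict_increasing_lt_rev w Hw); now rewrite wwi).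
    exists (Rmin (wi T) t). split; [split; [apply Rmin_glb_lt | ]; lra |].
    intros y Hy. pose proof (Rmin_l (wi T) t).
    exists (w y). split; [split | now left].
    + rewrite <- Ws. apply Hw. lra.
    + rewrite <- (wwi T). apply Hw. lra.
  - exfalso. exact (orbital_moves w s t Ho T HT Heq).
  - exists (Rmin (w T) t). split; [split; [apply Rmin_glb_lt | ]; lra |].
    intros y Hy. pose proof (Rmin_l (w T) t).
    exists (wi y). split; [split | right; apply wwi].
    + rewrite <- (wiw s), Ws. apply Hwi. lra.
    + rewrite <- (wiw T). apply Hwi. lra.
Qed.

(** * Affine germs and rigidity *)

(* The local form of piecewise linearity that survives inversion and
   composition without any bookkeeping of breakpoints. *)
Definition affine_right_germ (f : R -> R) (x : R) : Prop :=
  exists e m q, 0 < e /\ 0 < m /\ forall y, x <= y <= x + e -> f y = m * y + q.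

Definition pl_homeo (f g : R -> R) : Prop :=
  inverse_of f g /\ strict_increasing f /\ forall x, affine_right_germ f x.

Lemma affine_right_germ_intro f x : strict_increasing f ->
  (exists e m q, 0 < e /\ forall y, x <= y <= x + e -> f y = m * y + q) ->
  affine_right_germ f x.
Proof.
  intros Hf (e & m & q & He & Hy). exists e, m, q. split; [exact He | split; [| exact Hy]].
  assert (Hinc := Hf x (x + e) ltac:(lra)).
  rewrite (Hy x), (Hy (x + e)) in Hinc by lra. nra.
Qed.

Lemma pl_homeo_inv f g : pl_homeo f g -> pl_homeo g f.
Proof.
  intros ([gf fg] & Hf & Hgerm). assert (Hg := strict_increasing_inverse f g (conj gf fg) Hf).
  split; [split; assumption | split; [exact Hg |]].
  intros y. destruct (Hgerm (g y)) as (e & m & q & He & Hm & Hlin).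
  assert (Hy : y = m * g y + q) by (rewrite <- Hlin by lra; symmetry; apply fg).
  exists (m * e), (/ m), (- q / m). split; [nra | split; [now apply Rinv_0_lt_compat |]].
  intros z Hz.
  assert (Hgz : g y <= g z <= g y + e).
  { split; [apply (strict_increasing_le g Hg); lra |].
    apply (strict_increasing_le_rev f Hf). rewrite fg, Hlin by lra. nra. }
  rewrite <- (fg z) at 2. rewrite (Hlin (g z) Hgz). field. lra.
Qed.

Lemma pl_homeo_comp f fi g gi : pl_homeo f fi -> pl_homeo g gi ->
  pl_homeo (fun x => f (g x)) (fun x => gi (fi x)).
Proof.
  intros ([fif ffi] & Hf & Hfgerm) ([gig ggi] & Hg & Hggerm).
  split; [split; intros x; [now rewrite fif, gig | now rewrite ggi, ffi] |].
  split; [intros x y Hxy; now apply Hf, Hg |].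
  intros x. destruct (Hggerm x) as (e1 & m1 & q1 & He1 & Hm1 & Hlin1).
  destruct (Hfgerm (g x)) as (e2 & m2 & q2 & He2 & Hm2 & Hlin2).
  assert (He2m : 0 < e2 / m1) by (apply Rdiv_lt_0_compat; assumption).
  assert (m1 * (e2 / m1) = e2) by (field; lra).
  pose proof (Rmin_l e1 (e2 / m1)). pose proof (Rmin_r e1 (e2 / m1)).
  exists (Rmin e1 (e2 / m1)), (m2 * m1), (m2 * q1 + q2).
  split; [now apply Rmin_pos | split; [nra |]].
  intros y Hy. rewrite (Hlin1 y) by lra. rewrite Hlin2; [ring |].
  rewrite (Hlin1 x) by lra. split; nra.
Qed.

Lemma affine_germ_fixes_near f s : affine_right_germ f s -> f s = s ->
  (forall e, 0 < e -> exists q, s < q < s + e /\ f q = q) ->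
  exists e, 0 < e /\ forall y, s <= y <= s + e -> f y = y.
Proof.
  intros (e & m & q & He & _ & Hlin) Fs Hacc.
  destruct (Hacc e He) as [p [Hp Fp]].
  rewrite Hlin in Fs, Fp by lra.
  assert (Hm : m = 1) by (apply (Rmult_eq_reg_r (p - s)); lra).
  subst m. exists e. split; [exact He |]. intros y Hy. rewrite Hlin by lra. lra.
Qed.

Lemma affine_germs_commute f g s : affine_right_germ f s -> affine_right_germ g s ->
  f s = s -> g s = s -> exists e, 0 < e /\ forall y, s <= y <= s + e -> f (g y) = g (f y).
Proof.
  intros (e1 & l & q1 & He1 & Hl & Hf) (e2 & m & q2 & He2 & Hm & Hg) Fs Gs.
  rewrite Hf in Fs by lra. rewrite Hg in Gs by lra.
  assert (0 < e1 / m) by (apply Rdiv_lt_0_compat; assumption).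
  assert (0 < e2 / l) by (apply Rdiv_lt_0_compat; assumption).
  assert (m * (e1 / m) = e1) by (field; lra).
  assert (l * (e2 / l) = e2) by (field; lra).
  set (e := Rmin (Rmin e1 e2) (Rmin (e1 / m) (e2 / l))).
  assert (e <= Rmin e1 e2 /\ e <= Rmin (e1 / m) (e2 / l)) as [E1 E2]
    by (split; [apply Rmin_l | apply Rmin_r]).
  pose proof (Rmin_l e1 e2). pose proof (Rmin_r e1 e2).
  pose proof (Rmin_l (e1 / m) (e2 / l)). pose proof (Rmin_r (e1 / m) (e2 / l)).
  exists e. split; [repeat apply Rmin_pos; assumption |]. intros y Hy.
  rewrite (Hg y), (Hf y) by lra. rewrite Hf, Hg by nra. nra.
Qed.

Lemma fixed_along_step w k y z : strict_increasing w ->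
  k (w y) = w (k y) -> k (w z) = w (k z) -> k z = z -> (w y = z \/ w z = y) -> k y = y.
Proof.
  intros Hw Hy Hz Fz [E | E].
  - apply (strict_increasing_inj w Hw). now rewrite <- Hy, E.
  - now rewrite <- E, Hz, Fz.
Qed.

Lemma commute_id_from_left_end w wi k s t e :
  inverse_of w wi -> strict_increasing w -> orbital w s t -> 0 < e ->
  (forall y, s < y < s + e -> k y = y) ->
  (forall x, s < x < t -> k (w x) = w (k x)) ->
  forall y, s < y < t -> k y = y.
Proof.
  intros Hwwi Hw Ho He Hnear Hcomm.
  assert (Hst := proj1 Ho).
  set (E := fun x => s < x <= t /\ forall y, s < y < x -> k y = y).
  assert (Estart : E (Rmin (s + e) t)).
  { pose proof (Rmin_l (s + e) t). pose proof (Rmin_r (s + e) t).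
    split; [split; [apply Rmin_glb_lt |]; lra |].
    intros y Hy. apply Hnear. lra. }
  destruct (lub_exists E t _ (fun x Ex => proj2 (proj1 Ex)) Estart)
    as (T & HTt & HT & HTapprox).
  assert (Hbelow : forall y, s < y < T -> k y = y).
  { intros y Hy. destruct (HTapprox y) as (x & [_ Hx] & Hyx); [lra |]. apply Hx. lra. }
  assert (HsT : s < T) by (pose proof (proj1 (proj1 Estart)); apply HT in Estart; lra).
  destruct (Req_dec T t) as [<- | HTne]; [exact Hbelow | exfalso].
  destruct (orbital_step_down w wi s t T Hwwi Hw Ho) as (T' & HT' & Hstep); [lra |].
  enough (E T') by (assert (T' <= T) by (apply HT; assumption); lra).
  split; [lra |].
  intros y Hy. destruct (Rlt_le_dec y T) as [HyT | HTy]; [apply Hbelow; lra |].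
  destruct (Hstep y) as (z & Hz & Hwz); [lra |].
  apply (fixed_along_step w k y z Hw);
    [apply Hcomm; lra | apply Hcomm; lra | apply Hbelow; lra | exact Hwz].
Qed.

(* The infimum of the fixed points of [k] in the orbital is fixed, and [w] or
   its inverse would push it further down; so it is [s], where the affine
   germ of [k] is the identity. *)
Lemma commute_fixed_point_id w wi k ki s t :
  pl_homeo w wi -> pl_homeo k ki -> orbital w s t ->
  (forall x, s < x < t -> k (w x) = w (k x)) ->
  (exists p, s < p < t /\ k p = p) -> forall y, s < y < t -> k y = y.
Proof.
  intros (Hwwi & Hw & _) (Hkki & Hk & Hgerm) Ho Hcomm [p [Hp Fp]].
  set (P := fun x => s < x < t /\ k x = x).
  destruct (glb_exists P s p) as (m & Hsm & Hm & Happrox);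
    [intros x [Hx _]; lra | split; assumption |].
  assert (Hmp : m <= p) by (apply Hm; split; assumption).
  assert (Fm : k m = m).
  { apply (fixed_point_closed k ki m Hkki Hk). intros e He.
    destruct (Happrox (m + e)) as (y & Py & Hy); [lra |].
    exists y. split; [| exact (proj2 Py)].
    assert (m <= y) by (apply Hm, Py). apply Rabs_def1; lra. }
  assert (Hms : m = s).
  { destruct (Rle_lt_dec m s) as [| Hsm']; [lra | exfalso].
    destruct (orbital_step_down w wi s t m Hwwi Hw Ho) as (m' & Hm' & Hstep); [lra |].
    destruct (Hstep m) as (z & Hz & Hwz); [lra |].
    assert (Fz : k z = z).
    { apply (fixed_along_step w k z m Hw); [apply Hcomm; lra | apply Hcomm; lra | exact Fm |].
      destruct Hwz; [right | left]; assumption. }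
    assert (m <= z) by (apply Hm; split; [lra | exact Fz]). lra. }
  subst m.
  destruct (affine_germ_fixes_near k s (Hgerm s) Fm) as (e & He & Hid).
  { intros e He. destruct (Happrox (s + e)) as (q & [Hq Fq] & Hqe); [lra |].
    exists q. split; [lra | exact Fq]. }
  apply (commute_id_from_left_end w wi k s t e Hwwi Hw Ho He); [| exact Hcomm].
  intros y Hy. apply Hid. lra.
Qed.

Lemma commuting_orbital_is_orbital U Ui K Ki s t x :
  pl_homeo U Ui -> pl_homeo K Ki -> (forall z, K (U z) = U (K z)) ->
  orbital U s t -> s < x < t -> K x <> x ->
  (exists lo hi, lo <= x <= hi /\ K lo = lo /\ K hi = hi) -> orbital K s t.
Proof.
  intros HU HK Hcomm Ho Hx Hmv (lo & hi & Hlh & Flo & Fhi).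
  destruct (orbital_around K Ki x lo hi (proj1 HK) (proj1 (proj2 HK)) Hlh Flo Fhi Hmv)
    as (l & h & Hx' & OK).
  assert (Kmoves : forall y, s < y < t -> K y <> y).
  { intros y Hy Fy. apply Hmv.
    apply (commute_fixed_point_id U Ui K Ki s t HU HK Ho);
      [intros z _; apply Hcomm | now exists y | exact Hx]. }
  assert (Umoves : forall y, l < y < h -> U y <> y).
  { intros y Hy Fy. apply (orbital_moves U s t Ho x Hx).
    apply (commute_fixed_point_id K Ki U Ui l h HK HU OK);
      [intros z _; symmetry; apply Hcomm | now exists y | exact Hx']. }
  destruct (orbitals_meeting_eq U K s t l h x Ho OK Hx Hx' Kmoves Umoves) as [-> ->].
  exact OK.
Qed.

Lemma commuting_orbitals_eq U Ui V Vi K Ki s1 t1 s2 t2 x :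
  pl_homeo U Ui -> pl_homeo V Vi -> pl_homeo K Ki ->
  (forall z, K (U z) = U (K z)) -> (forall z, K (V z) = V (K z)) ->
  orbital U s1 t1 -> orbital V s2 t2 -> s1 < x < t1 -> s2 < x < t2 -> K x <> x ->
  (exists lo hi, lo <= x <= hi /\ K lo = lo /\ K hi = hi) -> s1 = s2 /\ t1 = t2.
Proof.
  intros HU HV HK CU CV OU OV Hx1 Hx2 Hmv Hlh.
  assert (O1 := commuting_orbital_is_orbital U Ui K Ki s1 t1 x HU HK CU OU Hx1 Hmv Hlh).
  assert (O2 := commuting_orbital_is_orbital V Vi K Ki s2 t2 x HV HK CV OV Hx2 Hmv Hlh).
  exact (orbitals_meeting_eq K K s1 t1 s2 t2 x O1 O2 Hx1 Hx2
           (orbital_moves K s1 t1 O1) (orbital_moves K s2 t2 O2)).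
Qed.

(** * Elements of PL_0(I) *)

Lemma commp_id_commute (x y : elt) :
  inverse_of (fst x) (snd x) -> inverse_of (fst y) (snd y) ->
  (forall t, ~ 0 <= t <= 1 -> fst x t = t /\ fst y t = t) ->
  is_id (commp x y) -> forall t, fst y (fst x t) = fst x (fst y t).
Proof.
  intros [_ Hx] [_ Hy] Hout Hid t.
  destruct (classic (0 <= t <= 1)) as [Ht | Ht].
  - specialize (Hid t Ht). unfold commp, mulp, invp in Hid. simpl in Hid.
    apply (f_equal (fst y)) in Hid. rewrite Hy in Hid.
    apply (f_equal (fst x)) in Hid. rewrite Hx in Hid. exact Hid.
  - destruct (Hout t Ht) as [Fx Fy]. now rewrite Fx, Fy, Fx.
Qed.

Section PL0.

Variable f : R -> R.
Hypothesis Hf : PL0 f.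

Lemma PL0_fixes_outside x : x < 0 \/ 1 < x -> f x = x.
Proof. exact (proj1 Hf x). Qed.

Lemma PL0_fix_1 : f 1 = 1.
Proof. exact (proj1 (proj2 (proj2 Hf))). Qed.

Lemma PL0_strict_increasing : strict_increasing f.
Proof.
  destruct Hf as (Hout & F0 & F1 & Hinc & _).
  assert (Hunit : forall x, 0 <= x <= 1 -> 0 <= f x <= 1).
  { intros x Hx. split.
    - destruct (Req_dec x 0) as [-> | ]; [lra |]. rewrite <- F0. left; apply Hinc; lra.
    - destruct (Req_dec x 1) as [-> | ]; [lra |]. rewrite <- F1. left; apply Hinc; lra. }
  intros x y Hxy.
  destruct (Rle_lt_dec 0 x) as [Hx0 | Hx0]; destruct (Rle_lt_dec y 1) as [Hy1 | Hy1].
  - apply Hinc; lra.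
  - rewrite (Hout y) by lra.
    destruct (Rle_lt_dec x 1); [specialize (Hunit x) | rewrite (Hout x) by lra]; lra.
  - rewrite (Hout x) by lra.
    destruct (Rle_lt_dec 0 y); [specialize (Hunit y) | rewrite (Hout y) by lra]; lra.
  - rewrite (Hout x), (Hout y) by lra. lra.
Qed.

Lemma subdivision_piece (p : nat -> R) x :
  p 0%nat <= x -> forall j, x < p j -> exists i, (i < j)%nat /\ p i <= x < p (S i).
Proof.
  intros H0 j. induction j as [| j IH]; intros Hx; [lra |].
  destruct (Rlt_le_dec x (p j)) as [Hlt | Hle].
  - destruct (IH Hlt) as (i & Hi & Hp). exists i. split; [lia | exact Hp].
  - exists j. split; [lia | lra].
Qed.

Lemma PL0_affine_right_germ x : affine_right_germ f x.
Proof.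
  apply affine_right_germ_intro; [exact PL0_strict_increasing |].
  destruct (Rlt_le_dec x 0) as [Hx0 | Hx0]; [| destruct (Rle_lt_dec 1 x) as [Hx1 | Hx1]].
  - exists (- x / 2), 1, 0. split; [lra |]. intros y Hy.
    rewrite PL0_fixes_outside by lra. ring.
  - exists 1, 1, 0. split; [lra |]. intros y Hy.
    destruct (Req_dec y 1) as [-> | ]; [rewrite PL0_fix_1 | rewrite PL0_fixes_outside by lra];
      ring.
  - destruct Hf as (_ & _ & _ & _ & k & p & P0 & Pk & _ & Paff).
    destruct (subdivision_piece p x ltac:(lra) k ltac:(lra)) as (i & Hi & Hp).
    destruct (Paff i Hi) as (m & q & Hlin).
    exists (p (S i) - x), m, q. split; [lra |]. intros y Hy. apply Hlin. lra.
Qed.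

Lemma PL0_pl_homeo g : inverse_of f g -> pl_homeo f g.
Proof.
  intros Hg. exact (conj Hg (conj PL0_strict_increasing PL0_affine_right_germ)).
Qed.

Lemma PL0_orbital_in_unit s t : orbital f s t -> 0 <= s /\ t <= 1.
Proof.
  intros Ho. assert (Hst := proj1 Ho). split.
  - destruct (Rle_lt_dec 0 s) as [| Hs]; [assumption | exfalso].
    pose proof (Rmin_l 0 t). pose proof (Rmin_r 0 t).
    assert (s < Rmin 0 t) by (apply Rmin_glb_lt; lra).
    apply (orbital_moves f s t Ho ((s + Rmin 0 t) / 2)); [lra |].
    apply PL0_fixes_outside. lra.
  - destruct (Rle_lt_dec t 1) as [| Ht]; [assumption | exfalso].
    pose proof (Rmax_l 1 s). pose proof (Rmax_r 1 s).
    assert (Rmax 1 s < t) by (apply Rmax_lub_lt; lra).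
    apply (orbital_moves f s t Ho ((Rmax 1 s + t) / 2)); [lra |].
    apply PL0_fixes_outside. lra.
Qed.

End PL0.

(** * The down-bump [(a,c)] of [f0] *)

Section Bump.

Variables f0 g0 f1 g1 : R -> R.
Hypothesis Hf0 : PL0 f0.
Hypothesis Hf1 : PL0 f1.
Hypothesis Hg0 : inverse_of f0 g0.
Hypothesis Hg1 : inverse_of f1 g1.
Hypothesis Hrel1 : is_id (commp (conjp (f1, g1) (f0, g0)) (mulp (f0, g0) (invp (f1, g1)))).
Hypothesis Hrel2 : is_id (commp (mulp (f0, g0) (invp (f1, g1)))
                                (conjp (f1, g1) (mulp (f0, g0) (f0, g0)))).
Variables a c : R.
Hypothesis HA : down_bump f0 a c.
Hypothesis HnotA : ~ orbital f1 a c.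
Variable n : nat.
Variables b d : nat -> R.
Hypothesis Hn : (1 <= n)%nat.
Hypothesis Horb : forall i, (1 <= i <= n)%nat ->
  orbital f1 (b i) (d i) /\ meets (b i) (d i) a c.
Hypothesis Hincr : forall i, (1 <= i < n)%nat -> d i <= b (S i).
Hypothesis Hall : forall b' d', orbital f1 b' d' -> meets b' d' a c ->
  exists i, (1 <= i <= n)%nat /\ b' = b i /\ d' = d i.

(* In the right-action notation of the paper, [H] is [f0 f1^-1] and [conj0 X]
   is [X^f0]. *)
Let conj0 (X : R -> R) (x : R) : R := f0 (X (g0 x)).
Let H (x : R) : R := g1 (f0 x).
Let Hinv (x : R) : R := g0 (f1 x).
Let U := conj0 f1.
Let Uinv := conj0 g1.
Let V := conj0 U.
Let Vinv := conj0 Uinv.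

Lemma g0_f0 x : g0 (f0 x) = x. Proof. apply Hg0. Qed.
Lemma f0_g0 x : f0 (g0 x) = x. Proof. apply Hg0. Qed.
Lemma g1_f1 x : g1 (f1 x) = x. Proof. apply Hg1. Qed.

Lemma inc_f0 : strict_increasing f0. Proof. exact (PL0_strict_increasing f0 Hf0). Qed.
Lemma inc_f1 : strict_increasing f1. Proof. exact (PL0_strict_increasing f1 Hf1). Qed.
Lemma pl_f0 : pl_homeo f0 g0. Proof. exact (PL0_pl_homeo f0 Hf0 g0 Hg0). Qed.
Lemma pl_f1 : pl_homeo f1 g1. Proof. exact (PL0_pl_homeo f1 Hf1 g1 Hg1). Qed.

Lemma pl_conj0 X Xi : pl_homeo X Xi -> pl_homeo (conj0 X) (conj0 Xi).
Proof.
  intros HX. exact (pl_homeo_comp f0 g0 (fun x => X (g0 x)) (fun x => f0 (Xi x)) pl_f0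
                      (pl_homeo_comp X Xi g0 f0 HX (pl_homeo_inv f0 g0 pl_f0))).
Qed.

Lemma pl_U : pl_homeo U Uinv. Proof. exact (pl_conj0 f1 g1 pl_f1). Qed.
Lemma pl_V : pl_homeo V Vinv. Proof. exact (pl_conj0 U Uinv pl_U). Qed.
Lemma pl_H : pl_homeo H Hinv.
Proof. exact (pl_homeo_comp g1 f1 f0 g0 (pl_homeo_inv f1 g1 pl_f1) pl_f0). Qed.

Lemma fixed_outside_unit t : ~ 0 <= t <= 1 -> f0 t = t /\ g0 t = t /\ f1 t = t /\ g1 t = t.
Proof.
  intros Ht. assert (Hout : t < 0 \/ 1 < t) by lra.
  pose proof (PL0_fixes_outside f0 Hf0 t Hout) as F0.
  pose proof (PL0_fixes_outside f1 Hf1 t Hout) as F1.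
  repeat split; [exact F0 | exact (inverse_fixed f0 g0 t Hg0 F0) |
                 exact F1 | exact (inverse_fixed f1 g1 t Hg1 F1)].
Qed.

Lemma H_U_comm z : H (U z) = U (H z).
Proof.
  refine (commp_id_commute (conjp (f1, g1) (f0, g0)) (mulp (f0, g0) (invp (f1, g1)))
            (proj1 pl_U) (proj1 pl_H) _ Hrel1 z).
  intros t Ht. destruct (fixed_outside_unit t Ht) as (F0 & G0 & F1 & G1).
  simpl. rewrite G0, F1, F0, G1. split; reflexivity.
Qed.

Lemma H_V_comm z : H (V z) = V (H z).
Proof.
  symmetry.
  refine (commp_id_commute (mulp (f0, g0) (invp (f1, g1)))
            (conjp (f1, g1) (mulp (f0, g0) (f0, g0))) (proj1 pl_H) (proj1 pl_V) _ Hrel2 z).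
  intros t Ht. destruct (fixed_outside_unit t Ht) as (F0 & G0 & F1 & G1).
  simpl. rewrite G0, G0, F1, F0, F0, G1. split; reflexivity.
Qed.

Lemma conj0_f0 X y : conj0 X (f0 y) = f0 (X y).
Proof. unfold conj0. now rewrite g0_f0. Qed.

Lemma conj0_f1 X : (forall z, H (X z) = X (H z)) -> forall y, conj0 X (f1 y) = f1 (X y).
Proof.
  intros HX y. assert (E := HX (g0 (f1 y))). unfold H in E. rewrite f0_g0, g1_f1 in E.
  unfold conj0. rewrite <- E. symmetry. apply Hg1.
Qed.

Lemma orbital_conj0 X s t : orbital X s t -> orbital (conj0 X) (f0 s) (f0 t).
Proof. exact (orbital_conj f0 g0 X (conj0 X) s t Hg0 inc_f0 (conj0_f0 X)). Qed.

Lemma orbital_conj0_f1 X s t : (forall z, H (X z) = X (H z)) ->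
  orbital X s t -> orbital (conj0 X) (f1 s) (f1 t).
Proof. intros HX. exact (orbital_conj f1 g1 X (conj0 X) s t Hg1 inc_f1 (conj0_f1 X HX)). Qed.

Lemma H_fixed_iff y : H y = y <-> f1 y = f0 y.
Proof.
  unfold H. split; intros E.
  - rewrite <- E at 1. apply Hg1.
  - rewrite <- E. apply g1_f1.
Qed.

Lemma H_fixed_around x : exists lo hi, lo <= x <= hi /\ H lo = lo /\ H hi = hi.
Proof.
  apply fixed_points_around. intros t Ht.
  destruct (fixed_outside_unit t ltac:(lra)) as (F0 & _ & _ & G1).
  unfold H. now rewrite F0, G1.
Qed.

Lemma a_lt_c : a < c. Proof. exact (proj1 (proj1 HA)). Qed.
Lemma f0_a : f0 a = a. Proof. exact (orbital_fix_l f0 a c (proj1 HA)). Qed.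
Lemma f0_c : f0 c = c. Proof. exact (orbital_fix_r f0 a c (proj1 HA)). Qed.
Lemma f0_below x : a < x < c -> f0 x < x. Proof. exact (proj2 HA x). Qed.

Lemma f0_gt_a x : a < x -> a < f0 x.
Proof. intros Hx. rewrite <- f0_a at 1. now apply inc_f0. Qed.
Lemma f0_lt_a x : x < a -> f0 x < a.
Proof. intros Hx. rewrite <- f0_a. now apply inc_f0. Qed.
Lemma f0_le_c x : x <= c -> f0 x <= c.
Proof. intros Hx. rewrite <- f0_c. now apply (strict_increasing_le f0 inc_f0). Qed.
Lemma f0_ge_c x : c <= x -> c <= f0 x.
Proof. intros Hx. rewrite <- f0_c at 1. now apply (strict_increasing_le f0 inc_f0). Qed.

Lemma f0_in_bump x : a < x < c -> a < f0 x < c.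
Proof. intros Hx. split; [apply f0_gt_a | pose proof (f0_below x Hx)]; lra. Qed.

Lemma f0_fixed_ge_c x : a < x -> f0 x = x -> c <= x.
Proof.
  intros Hax Fx. destruct (Rle_lt_dec c x) as [| Hxc]; [assumption |].
  assert (f0 x < x) by (apply f0_below; lra). lra.
Qed.

Lemma orbital_f1 i : (1 <= i <= n)%nat -> orbital f1 (b i) (d i).
Proof. intros Hi. exact (proj1 (Horb i Hi)). Qed.

Lemma orbital_f1_meets i : (1 <= i <= n)%nat -> a < d i /\ b i < c.
Proof.
  intros Hi. assert (M := proj2 (Horb i Hi)). unfold meets in M.
  pose proof (Rmax_l (b i) a). pose proof (Rmax_r (b i) a).
  pose proof (Rmin_l (d i) c). pose proof (Rmin_r (d i) c). lra.
Qed.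

Lemma b_lt_d i : (1 <= i <= n)%nat -> b i < d i.
Proof. intros Hi. exact (proj1 (orbital_f1 i Hi)). Qed.

Lemma d_le_b i j : (1 <= i)%nat -> (i < j <= n)%nat -> d i <= b j.
Proof.
  intros Hi Hij. induction j as [| j IH]; [lia |].
  destruct (Nat.eq_dec i j) as [-> | Hne]; [apply Hincr; lia |].
  assert (d i <= b j) by (apply IH; lia).
  assert (b j < d j) by (apply b_lt_d; lia).
  assert (d j <= b (S j)) by (apply Hincr; lia). lra.
Qed.

Lemma b_1_le i : (1 <= i <= n)%nat -> b 1%nat <= b i.
Proof.
  intros Hi. destruct (Nat.eq_dec i 1) as [-> | Hne]; [lra |].
  assert (d 1%nat <= b i) by (apply d_le_b; lia).
  assert (b 1%nat < d 1%nat) by (apply b_lt_d; lia). lra.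
Qed.

Lemma d_le_d_n i : (1 <= i <= n)%nat -> d i <= d n.
Proof.
  intros Hi. destruct (Nat.eq_dec i n) as [-> | Hne]; [lra |].
  assert (d i <= b n) by (apply d_le_b; lia).
  assert (b n < d n) by (apply b_lt_d; lia). lra.
Qed.

Lemma f1_moved_in_orbital y : a <= y <= c -> f1 y <> y ->
  exists i, (1 <= i <= n)%nat /\ b i < y < d i.
Proof.
  intros Hy Hmv. pose proof a_lt_c.
  destruct (fixed_points_around f1 y (PL0_fixes_outside f1 Hf1))
    as (lo & hi & Hlh & Flo & Fhi).
  destruct (orbital_around f1 g1 y lo hi Hg1 inc_f1 Hlh Flo Fhi Hmv) as (l & h & Hy' & O).
  destruct (Hall l h O) as (i & Hi & -> & ->).
  - unfold meets. apply Rmax_lub_lt; apply Rmin_glb_lt; lra.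
  - exists i. split; assumption.
Qed.

Lemma Uinv_H_comm z : Uinv (H z) = H (Uinv z).
Proof.
  destruct pl_U as ([UiU UUi] & _ & _).
  rewrite <- (UUi z) at 1. now rewrite H_U_comm, UiU.
Qed.

(* Near [s] the germs of [f0] and [U] commute, so [V = U^f0] agrees with [U];
   rigidity along the orbital of [H] spreads this to the whole orbital, and
   then [f0] commutes with [U] there. *)
Lemma f0_id_on_invariant_U_orbital s t :
  orbital U s t -> f0 s = s -> f0 t = t ->
  (exists x, s < x < t /\ H x <> x) -> (exists p, s < p < t /\ f0 p = p) ->
  forall y, s < y < t -> f0 y = y.
Proof.
  intros OU Fs Ft [x [Hx Hmv]] Hp.
  assert (OH := commuting_orbital_is_orbital U Uinv H Hinv s t x pl_U pl_H H_U_comm OU Hx Hmv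
                  (H_fixed_around x)).
  destruct pl_U as ([UiU UUi] & _ & U_germ).
  destruct pl_f0 as (_ & _ & f0_germ).
  destruct (affine_germs_commute f0 U s (f0_germ s) (U_germ s) Fs (orbital_fix_l U s t OU))
    as (e & He & Hgerm).
  assert (Hse : s < f0 (s + e)) by (rewrite <- Fs at 1; apply inc_f0; lra).
  assert (HVU : forall y, s < y < t -> V y = U y).
  { intros y Hy. rewrite <- (UUi (V y)). f_equal.
    apply (commute_id_from_left_end H Hinv (fun y => Uinv (V y)) s t (f0 (s + e) - s)
             (proj1 pl_H) (proj1 (proj2 pl_H)) OH); [lra | | | exact Hy].
    - intros z Hz. unfold V, conj0 at 1. rewrite Hgerm, f0_g0; [apply UiU |].
      split; apply (strict_increasing_le_rev f0 inc_f0); rewrite f0_g0; [rewrite Fs |]; lra.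
    - intros z Hz. now rewrite <- H_V_comm, Uinv_H_comm. }
  apply (commute_fixed_point_id U Uinv f0 g0 s t pl_U pl_f0 OU); [| exact Hp].
  intros z Hz. rewrite <- (HVU (f0 z)); [symmetry; apply conj0_f0 |].
  rewrite <- Fs, <- Ft. split; apply inc_f0; lra.
Qed.

Lemma f0_fixes_orbital_ends s t x : orbital f1 s t ->
  f0 s < x < f0 t -> f0 (f0 s) < x < f0 (f0 t) -> H x <> x -> f0 s = s /\ f0 t = t.
Proof.
  intros O Hx Hx' Hmv.
  assert (OU := orbital_conj0 f1 s t O).
  destruct (commuting_orbitals_eq U Uinv V Vinv H Hinv _ _ _ _ x pl_U pl_V pl_H
              H_U_comm H_V_comm OU (orbital_conj0 U _ _ OU) Hx Hx' Hmv (H_fixed_around x))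
    as [Es Et].
  split; symmetry; apply (strict_increasing_inj f0 inc_f0); assumption.
Qed.

Lemma no_invariant_f1_orbital_over_bump s t : orbital f1 s t -> f0 s = s -> f0 t = t ->
  s <= a -> c <= t -> s < a \/ c < t -> (exists x, s < x < t /\ H x <> x) -> False.
Proof.
  intros O Fs Ft Hsa Hct Hstrict Hmv. pose proof a_lt_c.
  pose proof (orbital_conj0 f1 s t O) as OU. rewrite Fs, Ft in OU.
  assert (Hp : exists p, s < p < t /\ f0 p = p)
    by (destruct Hstrict; [exists a | exists c]; split; [lra | exact f0_a | lra | exact f0_c]).
  assert (Hmid := f0_below ((a + c) / 2) ltac:(lra)).
  rewrite (f0_id_on_invariant_U_orbital s t OU Fs Ft Hmv Hp) in Hmid by lra. lra.
Qed.

Lemma H_moves_U_orbital s t p : orbital f1 s t -> a < s < c -> s < f0 t ->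
  f0 s < p < f0 t -> H p <> p.
Proof.
  intros O Hs Hst Hp Fp. assert (Hs' := f0_below s Hs).
  assert (E : H s = s).
  { apply (commute_fixed_point_id U Uinv H Hinv _ _ pl_U pl_H (orbital_conj0 f1 s t O));
      [intros z _; apply H_U_comm | exists p; split; assumption | lra]. }
  apply H_fixed_iff in E. rewrite (orbital_fix_l f1 s t O) in E. lra.
Qed.

Lemma a_le_b_1 : a <= b 1%nat.
Proof.
  assert (H1 : (1 <= 1 <= n)%nat) by lia.
  assert (O1 := orbital_f1 1 H1). destruct (orbital_f1_meets 1 H1) as [Had1 _].
  destruct (Rle_lt_dec a (b 1%nat)) as [| Hlt]; [assumption | exfalso].
  assert (Hmv : H a <> a).
  { intros E. apply H_fixed_iff in E. rewrite f0_a in E.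
    exact (orbital_moves f1 _ _ O1 a ltac:(lra) E). }
  pose proof (f0_lt_a _ Hlt). pose proof (f0_gt_a _ Had1).
  pose proof (f0_lt_a (f0 (b 1%nat)) ltac:(assumption)).
  pose proof (f0_gt_a (f0 (d 1%nat)) ltac:(assumption)).
  destruct (f0_fixes_orbital_ends _ _ a O1) as [Fs Ft]; [lra | lra | exact Hmv |].
  apply (no_invariant_f1_orbital_over_bump _ _ O1 Fs Ft); [lra | | left; exact Hlt |].
  - exact (f0_fixed_ge_c _ Had1 Ft).
  - exists a. split; [lra | exact Hmv].
Qed.

(* Otherwise [f1] fixes [[a, b 1]], and for [y] just below [b 1] this gives
   [H y = f0 y = U (f0 y)] while [U y <> y], against [H U = U H]. *)
Lemma b_1_le_a : b 1%nat <= a.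
Proof.
  assert (H1 : (1 <= 1 <= n)%nat) by lia. pose proof a_lt_c.
  assert (O1 := orbital_f1 1 H1). destruct (orbital_f1_meets 1 H1) as [_ Hb1c].
  destruct (Rle_lt_dec (b 1%nat) a) as [| Hgt]; [assumption | exfalso].
  assert (Hfix : forall y, a <= y <= b 1%nat -> f1 y = y).
  { intros y Hy. destruct (Req_dec (f1 y) y) as [| Hmv]; [assumption | exfalso].
    destruct (f1_moved_in_orbital y) as (i & Hi & Hyi); [lra | exact Hmv |].
    pose proof (b_1_le i Hi). lra. }
  assert (Hb1 := f0_below (b 1%nat) ltac:(lra)).
  assert (Hfbd : f0 (b 1%nat) < f0 (d 1%nat)) by (apply inc_f0, b_lt_d, H1).
  assert (Hab := f0_gt_a (b 1%nat) Hgt).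
  pose proof (Rmin_l (f0 (d 1%nat)) (b 1%nat)). pose proof (Rmin_r (f0 (d 1%nat)) (b 1%nat)).
  assert (f0 (b 1%nat) < Rmin (f0 (d 1%nat)) (b 1%nat)) by (apply Rmin_glb_lt; lra).
  set (y := (f0 (b 1%nat) + Rmin (f0 (d 1%nat)) (b 1%nat)) / 2).
  assert (Uy : U y <> y)
    by (apply (orbital_moves U _ _ (orbital_conj0 f1 _ _ O1)); unfold y; lra).
  assert (Hy : f0 y < y) by (apply f0_below; unfold y; lra).
  assert (Hay : a < f0 y) by (apply f0_gt_a; unfold y; lra).
  assert (Hy1 : H y = f0 y).
  { unfold H. apply (inverse_fixed f1 g1 _ Hg1), Hfix. unfold y in *; lra. }
  assert (Hy2 : U (f0 y) = f0 y).
  { unfold U. rewrite conj0_f0, Hfix; [reflexivity | unfold y; lra]. }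
  apply Uy, (strict_increasing_inj H (proj1 (proj2 pl_H))).
  now rewrite H_U_comm, Hy1, Hy2.
Qed.

Lemma b_1_eq_a : b 1%nat = a.
Proof. apply Rle_antisym; [exact b_1_le_a | exact a_le_b_1]. Qed.

Lemma orbital_f1_a : orbital f1 a (d 1%nat).
Proof. rewrite <- b_1_eq_a. apply orbital_f1. lia. Qed.

Lemma a_lt_d_1 : a < d 1%nat.
Proof. exact (proj1 orbital_f1_a). Qed.

Lemma f1_eq_f0_near_a y : a < y < f0 (d 1%nat) -> f1 y = f0 y.
Proof.
  assert (O1 := orbital_f1_a). pose proof a_lt_d_1. pose proof a_lt_c.
  assert (OU := orbital_conj0 f1 _ _ O1). rewrite f0_a in OU.
  destruct (classic (exists p, a < p < f0 (d 1%nat) /\ H p = p)) as [Hp | Hnone].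
  - intros Hy. apply H_fixed_iff.
    exact (commute_fixed_point_id U Uinv H Hinv _ _ pl_U pl_H OU (fun z _ => H_U_comm z)
             Hp y Hy).
  - intros _. exfalso.
    pose proof (f0_gt_a _ a_lt_d_1). pose proof (f0_gt_a (f0 (d 1%nat)) ltac:(assumption)).
    pose proof (Rmin_l (f0 (d 1%nat)) (f0 (f0 (d 1%nat)))).
    pose proof (Rmin_r (f0 (d 1%nat)) (f0 (f0 (d 1%nat)))).
    assert (a < Rmin (f0 (d 1%nat)) (f0 (f0 (d 1%nat)))) by (apply Rmin_glb_lt; lra).
    set (x := (a + Rmin (f0 (d 1%nat)) (f0 (f0 (d 1%nat)))) / 2).
    assert (Hmv : H x <> x) by (intros E; apply Hnone; exists x; split; [unfold x; lra | exact E]).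
    destruct (f0_fixes_orbital_ends a (d 1%nat) x O1) as [_ Ft];
      [rewrite f0_a; unfold x; lra | rewrite !f0_a; unfold x; lra | exact Hmv |].
    assert (Hcd := f0_fixed_ge_c _ a_lt_d_1 Ft).
    apply (no_invariant_f1_orbital_over_bump a (d 1%nat) O1 f0_a Ft); [lra | exact Hcd | right |].
    + destruct (Req_dec (d 1%nat) c) as [E | ]; [| lra]. rewrite E in O1. contradiction.
    + exists x. split; [unfold x; lra | exact Hmv].
Qed.

Lemma d_n_lt_c : d n < c.
Proof.
  assert (Hnn : (1 <= n <= n)%nat) by lia.
  assert (On := orbital_f1 n Hnn). pose proof a_lt_c. pose proof a_lt_d_1.
  destruct (Rlt_le_dec (d n) c) as [| Hcd]; [assumption | exfalso].
  destruct (Nat.eq_dec n 1) as [En | En].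
  - rewrite En in Hcd.
    destruct (Req_dec (d 1%nat) c) as [E | Hne].
    + apply HnotA. rewrite <- E. exact orbital_f1_a.
    + assert (Hc : c < f0 (d 1%nat)) by (rewrite <- f0_c at 1; apply inc_f0; lra).
      assert (E := f1_eq_f0_near_a c ltac:(lra)). rewrite f0_c in E.
      exact (orbital_moves f1 _ _ orbital_f1_a c ltac:(lra) E).
  - (* the [U]- and [V]-orbitals through [b n] would coincide *)
    assert (Hdb : d 1%nat <= b n) by (apply d_le_b; lia).
    destruct (orbital_f1_meets n Hnn) as [_ Hbc].
    assert (Hb := f0_below (b n) ltac:(lra)).
    assert (Hb2 := f0_below (f0 (b n)) (f0_in_bump (b n) ltac:(lra))).
    assert (Hfd := f0_ge_c _ Hcd). assert (Hfd2 := f0_ge_c _ Hfd).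
    assert (Hmv := H_moves_U_orbital (b n) (d n) (b n) On ltac:(lra) ltac:(lra) ltac:(lra)).
    destruct (f0_fixes_orbital_ends (b n) (d n) (b n) On) as [Fb _]; [lra | lra | exact Hmv |].
    lra.
Qed.

Lemma f1_fixes_beyond_d_n z : d n <= z <= c -> f1 z = z.
Proof.
  intros Hz. destruct (Req_dec (f1 z) z) as [| Hmv]; [assumption | exfalso].
  assert (Hnn : (1 <= n <= n)%nat) by lia. pose proof (proj1 (orbital_f1_meets n Hnn)).
  destruct (f1_moved_in_orbital z) as (i & Hi & Hzi); [lra | exact Hmv |].
  pose proof (d_le_d_n i Hi). lra.
Qed.

Lemma f1_c : f1 c = c.
Proof. apply f1_fixes_beyond_d_n. pose proof d_n_lt_c. lra. Qed.

(* The [f0]- and [f1]-images of [(s,t)] are orbitals of [conj0 X = X^f0 = X^f1]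
   followed by fixed points up to [c], so they end at the same place. *)
Lemma right_end_f0_eq_f1 X s t : (forall z, H (X z) = X (H z)) ->
  orbital X s t -> t <= c -> (forall z, t <= z <= c -> X z = z) -> f0 t = f1 t.
Proof.
  intros HX O Htc Hfix.
  assert (Fix0 := conj_fixes_image f0 g0 X (conj0 X) t c Hg0 inc_f0 f0_c (conj0_f0 X) Hfix).
  assert (Fix1 := conj_fixes_image f1 g1 X (conj0 X) t c Hg1 inc_f1 f1_c (conj0_f1 X HX) Hfix).
  assert (Hf0t := f0_le_c t Htc).
  assert (Hf1t : f1 t <= c)
    by (rewrite <- f1_c; apply (strict_increasing_le f1 inc_f1); exact Htc).
  assert (E1 := orbital_end_le _ _ _ _ _ (orbital_conj0 X s t O) Hf0t Fix1).
  assert (E2 := orbital_end_le _ _ _ _ _ (orbital_conj0_f1 X s t HX O) Hf1t Fix0).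
  lra.
Qed.

Lemma f0_d_n_lt_d_1 : f0 (d n) < d 1%nat.
Proof.
  assert (Hnn : (1 <= n <= n)%nat) by lia. pose proof d_n_lt_c. pose proof a_lt_d_1.
  destruct (orbital_f1_meets n Hnn) as [Hadn _].
  destruct (Nat.eq_dec n 1) as [En | En].
  - rewrite En in *. apply f0_below. lra.
  - destruct (Rlt_le_dec (f0 (d n)) (d 1%nat)) as [| Hge]; [assumption | exfalso].
    assert (Hz := f0_in_bump (d n) ltac:(lra)). assert (Hzd := f0_below (d n) ltac:(lra)).
    set (z := f0 (d n)) in *.
    assert (Hz2 := f0_in_bump z Hz). assert (Hfz := f0_below z Hz).
    assert (On := orbital_f1 n Hnn).
    assert (Ufix : forall w, z <= w <= c -> U w = w)
      by exact (conj_fixes_image f0 g0 f1 U (d n) c Hg0 inc_f0 f0_c (conj0_f0 f1)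
                  f1_fixes_beyond_d_n).
    assert (Vfix : forall w, f0 z <= w <= c -> V w = w)
      by exact (conj_fixes_image f0 g0 U V z c Hg0 inc_f0 f0_c (conj0_f0 U) Ufix).
    assert (OU := orbital_conj0 f1 _ _ On).
    assert (C1 := right_end_f0_eq_f1 U _ z H_U_comm OU ltac:(lra) Ufix).
    assert (C2 := right_end_f0_eq_f1 V _ (f0 z) H_V_comm (orbital_conj0 U _ _ OU)
                    ltac:(lra) Vfix).
    (* [f1] moves [z], and [H] fixes the point [f0 z] of the [U]-image of the
       [f1]-orbital through [z]. *)
    destruct (f1_moved_in_orbital z) as (j & Hj & Hzj); [lra | rewrite <- C1; lra |].
    destruct (Nat.eq_dec j 1) as [-> | Hj1]; [lra |].
    assert (Hdb : d 1%nat <= b j) by (apply d_le_b; lia).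
    assert (Oj := orbital_f1 j Hj).
    assert (Hz2j := orbital_maps_into f1 _ _ z inc_f1 Oj Hzj). rewrite <- C1 in Hz2j.
    apply (H_moves_U_orbital (b j) (d j) (f0 z) Oj).
    + lra.
    + enough (f0 z < f0 (d j)) by lra. apply inc_f0. lra.
    + split; apply inc_f0; lra.
    + apply H_fixed_iff. now rewrite C2.
Qed.

Lemma agree_near_a r : r < f0 (d 1%nat) -> agree_on f0 f1 a r.
Proof.
  intros Hr x Hx. destruct (Req_dec x a) as [-> | Hne].
  - rewrite f0_a. symmetry. exact (orbital_fix_l f1 _ _ orbital_f1_a).
  - symmetry. apply f1_eq_f0_near_a. lra.
Qed.

Lemma bump_orbitals :
  d n < c /\
  (exists rho, a < rho <= 1 /\ agree_on f0 f1 a rho) /\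
  b 1%nat = a /\
  (forall rho, a < rho <= 1 -> agree_on f0 f1 a rho ->
     (forall r, a < r <= 1 -> agree_on f0 f1 a r -> r <= rho) ->
     f0 (d 1%nat) <= rho) /\
  f0 (d n) < d 1%nat.
Proof.
  assert (Had := f0_gt_a _ a_lt_d_1).
  assert (Hd1 : f0 (d 1%nat) <= 1).
  { rewrite <- (PL0_fix_1 f0 Hf0). apply (strict_increasing_le f0 inc_f0).
    exact (proj2 (PL0_orbital_in_unit f1 Hf1 _ _ orbital_f1_a)). }
  split; [exact d_n_lt_c |].
  split; [exists ((a + f0 (d 1%nat)) / 2); split; [lra | apply agree_near_a; lra] |].
  split; [exact b_1_eq_a |].
  split; [| exact f0_d_n_lt_d_1].
  intros rho Hrho _ Hmax.
  destruct (Rle_lt_dec (f0 (d 1%nat)) rho) as [| Hlt]; [assumption | exfalso].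
  assert ((rho + f0 (d 1%nat)) / 2 <= rho) by (apply Hmax; [lra | apply agree_near_a; lra]).
  lra.
Qed.

End Bump.

Theorem lemma2p6
  (f0 g0 f1 g1 : R -> R)
  (Hf0 : PL0 f0) (Hf1 : PL0 f1)
  (Hg0 : inverse_of f0 g0) (Hg1 : inverse_of f1 g1)
  (Hrel1 : is_id (commp (conjp (f1, g1) (f0, g0)) (mulp (f0, g0) (invp (f1, g1)))))
  (Hrel2 : is_id (commp (mulp (f0, g0) (invp (f1, g1)))
                        (conjp (f1, g1) (mulp (f0, g0) (f0, g0)))))
  (a c : R) (HA : down_bump f0 a c) (HnotA : ~ orbital f1 a c)
  (n : nat) (b d : nat -> R) (Hn : (1 <= n)%nat)
  (Horb : forall i, (1 <= i <= n)%nat -> orbital f1 (b i) (d i) /\ meets (b i) (d i) a c)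
  (Hincr : forall i, (1 <= i < n)%nat -> d i <= b (S i))
  (Hall : forall b' d', orbital f1 b' d' -> meets b' d' a c ->
            exists i, (1 <= i <= n)%nat /\ b' = b i /\ d' = d i) :
  d n < c /\
  (exists rho, a < rho <= 1 /\ agree_on f0 f1 a rho) /\
  b 1%nat = a /\
  (forall rho, a < rho <= 1 -> agree_on f0 f1 a rho ->
     (forall r, a < r <= 1 -> agree_on f0 f1 a r -> r <= rho) ->
     f0 (d 1%nat) <= rho) /\
  f0 (d n) < d 1%nat.
Proof.
  exact (bump_orbitals f0 g0 f1 g1 Hf0 Hf1 Hg0 Hg1 Hrel1 Hrel2 a c HA HnotA n b d Hn
           Horb Hincr Hall).
Qed.
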